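(* Fix a field $\mathbb{F}$ and let $X$ be a regular $n$-dimensional CW complex. Then the matroid $M_n^{\mathbb{F}}(X)$ is $k$-connected if and only if for every integer $l$ with $1 \le l < k$ and every partition $X_n = E_1 \cup E_2$ into disjoint subsets with $|E_1|, |E_2| \ge l$, one has $\nu_{n-1}(E_1,E_2) \ge l$.
   Context: A CW complex $X$ is regular if it is compact (finitely many cells), all attaching maps are embeddings, and any two $k$-cells share at most one $(k-1)$-dimensional face. $X$ is $n$-dimensional if it has no cells of dimension greater than $n$ and the union of its $n$-cells is an open dense subset of $X$. $X_k$ is the set of $k$-cells. For $E \subseteq X_n$, $\overline{E}$ is the point-set closure in $X$ of the union of the cells in $E$. $M_n^{\mathbb{F}}(X)$ is the linear matroid over $\mathbb{F}$ on ground set $X_n$ represented by the columns of the matrix of the cellular boundary operator $\partial_n^{\mathbb{F}}$, with rank function $r$. $\nu_{n-1}(E_1,E_2)$ is the dimension of the kernel of the map $\tilde H_{n-1}(\overline{E_1}\cap\overline{E_2};\mathbb{F}) \to \tilde H_{n-1}(\overline{E_1};\mathbb{F}) \oplus \tilde H_{n-1}(\overline{E_2};\mathbb{F})$ induced by inclusions (reduced homology). A $k$-separation of a matroid $M$ on ground set $E$ is a partition of $E$ into disjoint $E_1, E_2$ with $|E_1|, |E_2| \ge k$ and $r(E_1) + r(E_2) \le r(M) + k - 1$; $M$ is $k$-connected if it has no $l$-separation for any $1 \le l < k$. *)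

(* Combinatorial model of a finite regular CW complex:
   cells are 'I_N, dim : 'I_N -> nat, and the cellular boundary operator is
   given by its incidence matrix D : 'M[F]_N, where D i j = [i : j] is the
   coefficient of the cell j in the cellular boundary of the cell i.
   Chains are row vectors; the augmented complex adds a (-1)-cell (index
   ord0 of 'I_N.+1) so that homology is reduced homology. *)
From HB Require Import structures.
From mathcomp Require Import all_boot all_order all_algebra.
Set Implicit Arguments.
Unset Strict Implicit.
Unset Printing Implicit Defensive.
Import GRing.Theory.
Local Open Scope ring_scope.

Section CW.
Variables (F : fieldType) (N : nat) (dim : 'I_N -> nat) (D : 'M[F]_N).

Definition facet : rel 'I_N := fun i j => D i j != 0.
Definition face_of (i j : 'I_N) : bool := connect facet i j.

Definition clos (E : {set 'I_N}) : {set 'I_N} :=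
  [set j | [exists i in E, face_of i j]].

Definition adim (i : 'I_N.+1) : nat :=
  if unlift ord0 i is Some j then (dim j).+1 else 0%N.

Definition Daug : 'M[F]_N.+1 :=
  \matrix_(i, j) match unlift ord0 i, unlift ord0 j with
                 | Some a, Some b => D a b
                 | Some a, None => if dim a == 0%N then 1 else 0
                 | None, _ => 0
                 end.

Definition aset (E : {set 'I_N}) : {set 'I_N.+1} :=
  ord0 |: [set lift ord0 j | j in E].

Definition rowsOf m (P : pred 'I_N.+1) (M : 'M[F]_(N.+1, m)) : 'M[F]_(N.+1, m) :=
  \matrix_(i, j) if P i then M i j else 0.

(* augmented-degree q  =  geometric degree q - 1 *)
Definition chainsA (S : {set 'I_N.+1}) (q : nat) : 'M[F]_N.+1 :=
  rowsOf [pred i | (i \in S) && (adim i == q)] 1%:M.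
Definition cyclesA (S : {set 'I_N.+1}) (q : nat) : 'M[F]_N.+1 :=
  (chainsA S q :&: kermx Daug)%MS.
Definition bdryA (S : {set 'I_N.+1}) (q : nat) : 'M[F]_N.+1 :=
  rowsOf [pred i | (i \in S) && (adim i == q.+1)] Daug.

(* nu_{n-1}(E1,E2): dimension of the kernel of
   H~_{n-1}(cl E1 /\ cl E2) -> H~_{n-1}(cl E1) (+) H~_{n-1}(cl E2),
   i.e. dim ((Z~(A/\B) /\ B(A) /\ B(B)) / B(A/\B)).  Geometric degree n-1 is
   augmented degree n. *)
Definition nu (n : nat) (E1 E2 : {set 'I_N}) : nat :=
  let A := aset (clos E1) in let B := aset (clos E2) in
  (\rank (cyclesA (A :&: B) n :&: bdryA A n :&: bdryA B n)%MS
   - \rank (bdryA (A :&: B) n))%N.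

(* the linear matroid M_n^F(X): rank of a set E of n-cells = rank of the
   boundary vectors (columns of the boundary operator) of the cells in E *)
Definition mrank (E : {set 'I_N}) : nat :=
  \rank (rowsOf [pred i | if unlift ord0 i is Some j then j \in E else false]
                Daug).

Definition cells (n : nat) : {set 'I_N} := [set c | dim c == n].

Definition is_separation (n l : nat) (E1 E2 : {set 'I_N}) : Prop :=
  [/\ E1 :&: E2 = set0, E1 :|: E2 = cells n, (l <= #|E1|)%N, (l <= #|E2|)%N &
      (mrank E1 + mrank E2 <= mrank (cells n) + l - 1)%N].

Definition k_connected (n k : nat) : Prop :=
  forall l, (1 <= l < k)%N -> ~ exists E1 E2, is_separation n l E1 E2.

Definition is_regular_CW (n : nat) : Prop :=
  (forall i, dim i <= n)%N /\
  (forall i j, D i j != 0 -> dim i = (dim j).+1) /\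
  (forall i j, D i j \in [:: 0; 1; -1]) /\
  Daug *m Daug = 0 /\
  (forall i, dim i = 1%N -> #|[set j | facet i j]| = 2%N) /\
  (* diamond property of face posets of regular CW complexes *)
  (forall i l, dim i = (dim l).+2 -> face_of i l ->
     #|[set j | facet i j && facet j l]| = 2%N) /\
  (forall i i', i != i' -> dim i = dim i' ->
     #|[set j | facet i j && facet i' j]| <= 1)%N /\
  (* n-dimensional: union of n-cells is dense, i.e. every cell is a face
     of an n-cell *)
  (forall c, exists2 i, dim i = n & face_of i c).

End CW.

(* If E1, E2 partition the n-cells, the n-cells of cl E1 are exactly E1, so
   cl E1 /\ cl E2 has no n-cells and B_{n-1}(cl E1 /\ cl E2) = 0.  The
   boundaries B(cl Ei) are spanned by the boundary vectors of the cells of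
   Ei, i.e. they are the row spaces X, Y whose ranks are r(E1), r(E2); they
   consist of (n-1)-cycles supported in cl E1 /\ cl E2.  Hence
   nu(E1, E2) = dim (X /\ Y) = r(E1) + r(E2) - r(X_n), and
   "r(E1) + r(E2) <= r(X_n) + l - 1" is exactly "nu(E1, E2) < l". *)
From HB Require Import structures.
From mathcomp Require Import all_boot all_order all_algebra.
From mathcomp Require Import zify.
Set Implicit Arguments.
Unset Strict Implicit.
Unset Printing Implicit Defensive.
Import GRing.Theory.
Local Open Scope ring_scope.

Section RowsOf.
Variables (F : fieldType) (N : nat).
Implicit Types (P Q : pred 'I_N.+1).

Lemma eq_rowsOf m P Q (M : 'M[F]_(N.+1, m)) : P =1 Q -> rowsOf P M = rowsOf Q M.
Proof. by move=> eqPQ; apply/matrixP=> i j; rewrite !mxE eqPQ. Qed.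

Lemma rowsOfE m P (M : 'M[F]_(N.+1, m)) : rowsOf P M = rowsOf P 1%:M *m M.
Proof.
apply/matrixP=> i j; rewrite !mxE (bigD1 i) //= big1 ?addr0.
  by rewrite !mxE eqxx; case: (P i); rewrite ?mul1r ?mul0r.
by move=> k /negbTE ki; rewrite !mxE eq_sym ki; case: (P i); rewrite ?mul0r.
Qed.

Lemma rowsOf1M P Q :
  rowsOf P 1%:M *m rowsOf Q 1%:M = rowsOf [pred i | P i && Q i] (1%:M : 'M[F]_N.+1).
Proof. by rewrite -rowsOfE; apply/matrixP=> i j; rewrite !mxE /=; case: (P i). Qed.

Lemma rowsOfS m P Q (M : 'M[F]_(N.+1, m)) :
  subpred P Q -> (rowsOf P M <= rowsOf Q M)%MS.
Proof.
move=> sPQ; have -> : rowsOf P M = rowsOf P (rowsOf Q M).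
  by apply/matrixP=> i j; rewrite !mxE; case: (boolP (P i)) => // /sPQ ->.
by rewrite (rowsOfE P) submxMl.
Qed.

Lemma sub_rowsOf1P m P (X : 'M[F]_(m, N.+1)) :
  reflect (X *m rowsOf P 1%:M = X) (X <= rowsOf P 1%:M)%MS.
Proof.
apply: (iffP idP) => [/submxP[W ->] | <-]; last exact: submxMl.
by rewrite -mulmxA rowsOf1M (@eq_rowsOf _ _ P) // => i; rewrite /= andbb.
Qed.

Lemma sub_rowsOf1 m P (X : 'M[F]_(m, N.+1)) :
  (forall i j, X i j != 0 -> P j) -> (X <= rowsOf P 1%:M)%MS.
Proof.
move=> suppX; apply/sub_rowsOf1P/matrixP=> i j.
rewrite !mxE (bigD1 j) //= big1 ?addr0 => [|k /negbTE kj]; last first.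
  by rewrite !mxE kj; case: (P k); rewrite ?mulr0.
rewrite !mxE eqxx; case Pj: (P j); first by rewrite mulr1.
by rewrite mulr0; apply/esym/eqP; apply: contraFT Pj; apply: suppX.
Qed.

Lemma cap_rowsOf1 P Q :
  (rowsOf P 1%:M :&: rowsOf Q 1%:M
    <= rowsOf [pred i | P i && Q i] (1%:M : 'M[F]_N.+1))%MS.
Proof.
apply/sub_rowsOf1P; rewrite -rowsOf1M mulmxA.
by rewrite (sub_rowsOf1P _ _ (capmxSl _ _)) (sub_rowsOf1P _ _ (capmxSr _ _)).
Qed.

End RowsOf.

Section Partition.
Variables (F : fieldType) (N : nat) (dim : 'I_N -> nat) (D : 'M[F]_N).
Hypothesis dim_facet : forall i j, D i j != 0 -> dim i = (dim j).+1.

Local Notation Daug := (Daug dim D).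
Local Notation cells := (cells dim).
Local Notation mrank := (mrank dim D).

Lemma path_facet_dim x p :
  path (facet D) x p -> (dim (last x p) + size p)%N = dim x.
Proof.
elim: p x => [|y p IHp] x /=; first by rewrite addn0.
by case/andP=> /dim_facet -> /IHp <-; rewrite addnS.
Qed.

Lemma face_of_eq_dim i j : face_of D i j -> dim j = dim i -> j = i.
Proof.
case/connectP=> -[|y p] // /path_facet_dim /= dimp -> eq_dim.
by move: dimp; rewrite eq_dim; lia.
Qed.

Lemma clos_cells n (E : {set 'I_N}) j :
  E \subset cells n -> (j \in clos D E) && (dim j == n) = (j \in E).
Proof.
move=> /subsetP sEn; apply/idP/idP => [|jE].
  rewrite inE => /andP[/existsP[i /andP[iE fij]] /eqP dj].
  move: (sEn _ iE); rewrite inE => /eqP di.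
  by rewrite (face_of_eq_dim fij) // dj di.
move: (sEn _ jE); rewrite inE => ->; rewrite andbT inE.
by apply/existsP; exists j; rewrite jE /face_of connect0.
Qed.

Lemma mem_aset (E : {set 'I_N}) j : (lift ord0 j \in aset E) = (j \in E).
Proof.
rewrite in_setU1 eq_sym (negbTE (neq_lift _ _)) /=.
by rewrite mem_imset //; apply: lift_inj.
Qed.

Lemma ord0_aset (E : {set 'I_N}) : ord0 \in aset E.
Proof. by rewrite in_setU1 eqxx. Qed.

Definition amem (E : {set 'I_N}) : pred 'I_N.+1 :=
  fun i => if unlift ord0 i is Some j then j \in E else false.

Lemma bdryA_clos n (E : {set 'I_N}) :
  E \subset cells n -> bdryA dim D (aset (clos D E)) n = rowsOf (amem E) Daug.
Proof.
move=> sEn; apply: eq_rowsOf => i /=; rewrite /amem.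
case: (unliftP ord0 i) => [j ->|->]; rewrite /adim ?liftK ?unlift_none ?andbF //.
by rewrite mem_aset eqSS clos_cells.
Qed.

Lemma bdryA_clos_sub_chains n (E : {set 'I_N}) :
  E \subset cells n ->
  (bdryA dim D (aset (clos D E)) n <= chainsA F dim (aset (clos D E)) n)%MS.
Proof.
move=> sEn; apply: sub_rowsOf1 => i j; rewrite !mxE /=.
case: (unliftP ord0 i) => [a ->|->]; rewrite /adim ?liftK ?unlift_none ?andbF ?eqxx //.
rewrite mem_aset eqSS; case: ifP => [/andP[aE /eqP da] | _]; last by rewrite eqxx.
case: (unliftP ord0 j) => [b ->|->]; rewrite ?liftK ?unlift_none.
  move=> Dab; rewrite mem_aset -da (dim_facet Dab) eqxx andbT.
  move: aE; rewrite !inE => /existsP[c /andP[cE fca]]; apply/existsP; exists c.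
  by rewrite cE /face_of (connect_trans fca) // connect1.
by case: (dim a =P 0%N) => [d0 _ | _]; [rewrite ord0_aset -da d0 | rewrite eqxx].
Qed.

Lemma bdryA_clos_disjoint n (E1 E2 : {set 'I_N}) :
  E1 :&: E2 = set0 -> E1 \subset cells n -> E2 \subset cells n ->
  bdryA dim D (aset (clos D E1) :&: aset (clos D E2)) n = 0.
Proof.
move=> E12 sE1 sE2; apply/matrixP=> i j; rewrite !mxE /=.
case: (unliftP ord0 i) => [a ->|->]; rewrite /adim ?liftK ?unlift_none ?andbF //.
rewrite in_setI !mem_aset eqSS; case: ifP => // /andP[/andP[a1 a2] /eqP da].
have: a \in E1 :&: E2 by rewrite inE -(clos_cells a sE1) -(clos_cells a sE2) a1 a2 da eqxx.
by rewrite E12 inE.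
Qed.

Lemma mrank_setU (E1 E2 : {set 'I_N}) :
  E1 :&: E2 = set0 ->
  mrank (E1 :|: E2) = \rank (rowsOf (amem E1) Daug + rowsOf (amem E2) Daug)%MS.
Proof.
move=> E12; have rowsOfU : rowsOf (amem (E1 :|: E2)) Daug
    = rowsOf (amem E1) Daug + rowsOf (amem E2) Daug.
  apply/matrixP=> i j; rewrite !mxE /amem.
  case: (unlift ord0 i) => [a|]; rewrite ?addr0 // inE.
  have: a \notin E1 :&: E2 by rewrite E12 inE.
  by rewrite inE; case: (a \in E1); case: (a \in E2); rewrite ?addr0 ?add0r.
apply/eqmx_rank/andP; split.
  by rewrite rowsOfU addmx_sub_adds.
by rewrite addsmx_sub !rowsOfS // => i; rewrite /amem /=; case: unlift => // a;
  rewrite inE => ->; rewrite ?orbT.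
Qed.

Hypothesis Daug_sq0 : Daug *m Daug = 0.

Lemma rowsOf_Daug_cycles P : (rowsOf P Daug <= kermx Daug)%MS.
Proof. by rewrite sub_kermx rowsOfE -mulmxA Daug_sq0 mulmx0. Qed.

Lemma nu_partition n (E1 E2 : {set 'I_N}) :
  E1 :&: E2 = set0 -> E1 :|: E2 = cells n ->
  (nu dim D n E1 E2 + mrank (cells n) = mrank E1 + mrank E2)%N.
Proof.
move=> E12 E12n.
have sE1 : E1 \subset cells n by rewrite -E12n subsetUl.
have sE2 : E2 \subset cells n by rewrite -E12n subsetUr.
set A := aset (clos D E1); set B := aset (clos D E2).
set X := rowsOf (amem E1) Daug; set Y := rowsOf (amem E2) Daug.
have cycles_capXY : (cyclesA dim D (A :&: B) n :&: X :&: Y :=: X :&: Y)%MS.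
  apply/eqmxP; rewrite -capmxA capmxSr sub_capmx submx_refl andbT.
  rewrite sub_capmx (submx_trans (capmxSl _ _) (rowsOf_Daug_cycles _)) andbT.
  have := capmxS (bdryA_clos_sub_chains sE1) (bdryA_clos_sub_chains sE2).
  rewrite -/A -/B (bdryA_clos sE1) (bdryA_clos sE2) => /submx_trans-> //.
  rewrite /chainsA; apply: submx_trans (cap_rowsOf1 F _ _) (rowsOfS _ _) => i /=.
  by rewrite in_setI => /and3P[/andP[-> _] -> ->].
rewrite /nu -/A -/B (bdryA_clos sE1) (bdryA_clos sE2) -/X -/Y.
rewrite (bdryA_clos_disjoint E12 sE1 sE2) mxrank0 subn0 cycles_capXY.
by rewrite -E12n mrank_setU // addnC mxrank_sum_cap.
Qed.

Lemma separation_nu n l (E1 E2 : {set 'I_N}) :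
  (1 <= l)%N -> E1 :&: E2 = set0 -> E1 :|: E2 = cells n ->
  (mrank E1 + mrank E2 <= mrank (cells n) + l - 1)%N = (nu dim D n E1 E2 < l)%N.
Proof.
move=> l_gt0 E12 E12n; have := nu_partition E12 E12n.
move: (nu _ _ _ _ _) (mrank _) (mrank E1) (mrank E2) => nu12 r r1 r2 nu_eq.
by apply/idP/idP; lia.
Qed.

End Partition.

Theorem mainTheorem4 (F : fieldType) (n N : nat) (dim : 'I_N -> nat)
    (D : 'M[F]_N) (k : nat) :
  is_regular_CW dim D n ->
  (k_connected dim D n k <->
   (forall l : nat, (1 <= l < k)%N ->
      forall E1 E2 : {set 'I_N},
        E1 :&: E2 = set0 -> E1 :|: E2 = cells dim n ->
        (l <= #|E1|)%N -> (l <= #|E2|)%N ->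
        (l <= nu dim D n E1 E2)%N)).
Proof.
move=> [_ [dim_facet [_ [Daug_sq0 _]]]].
split=> [k_conn l l_range E1 E2 E12 E12n l_E1 l_E2 | nu_ge l l_range].
  rewrite leqNgt; apply/negP=> nu_lt; apply: (k_conn l l_range).
  exists E1, E2; split=> //.
  by case/andP: l_range => l_gt0 _; rewrite separation_nu.
case=> [E1 [E2 [E12 E12n l_E1 l_E2]]].
case/andP: (l_range) => l_gt0 _; rewrite separation_nu // ltnNge.
by rewrite nu_ge.
Qed.
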